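(* Every singular point $K'=(\mathbf{k}'_1,\dots,\mathbf{k}'_6)$ of the singularity variety $V=0$ corresponds to one of the following configurations: (1) the three legs are collinear, i.e. all six points $\mathbf{k}'_1,\dots,\mathbf{k}'_6$ lie on a common line; (2) two legs are collinear and one leg degenerates to a point, i.e. for some permutation $(i,j,l)$ of $(1,2,3)$ one has $\mathbf{k}'_l=\mathbf{k}'_{l+3}$ and $\mathbf{k}'_i,\mathbf{k}'_{i+3},\mathbf{k}'_j,\mathbf{k}'_{j+3}$ lie on a common line; (3) two legs degenerate to points, i.e. $\mathbf{k}'_i=\mathbf{k}'_{i+3}$ and $\mathbf{k}'_j=\mathbf{k}'_{j+3}$ for some distinct $i,j\in\{1,2,3\}$; (4) one leg degenerates to a point and the carrier lines of the remaining two legs pass through that point, i.e. for some permutation $(i,j,l)$ of $(1,2,3)$ one has $\mathbf{k}'_l=\mathbf{k}'_{l+3}=:\mathbf{q}$, the points $\mathbf{q},\mathbf{k}'_i,\mathbf{k}'_{i+3}$ lie on a common line and the points $\mathbf{q},\mathbf{k}'_j,\mathbf{k}'_{j+3}$ lie on a common line.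
   Context: A configuration is $K'=(\mathbf{k}'_1,\dots,\mathbf{k}'_6)$ with $\mathbf{k}'_i=(c_i,d_i)^T\in\mathbb{R}^2$, viewed as a point of $\mathbb{R}^{12}$; $\mathbf{k}'_1,\mathbf{k}'_2,\mathbf{k}'_3$ are base anchor points, $\mathbf{k}'_4,\mathbf{k}'_5,\mathbf{k}'_6$ platform anchor points, and the $i$-th leg ($i=1,2,3$) joins $\mathbf{k}'_i$ and $\mathbf{k}'_{i+3}$; its carrier line is the line through these two points. The singularity polynomial is $V(K')=\det\mathbf{V}(K')$, where $\mathbf{V}(K')$ is the $3\times3$ matrix whose $i$-th column ($i=1,2,3$) consists of the two coordinates of $\mathbf{k}'_{i+3}-\mathbf{k}'_i$ followed by $\det(\mathbf{k}'_i,\mathbf{k}'_{i+3}-\mathbf{k}'_i)$. A singular point of $V=0$ is a point of $\mathbb{R}^{12}$ where $V$ and all its partial derivatives with respect to $c_1,\dots,c_6,d_1,\dots,d_6$ vanish. *)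

From Stdlib Require Import Reals List.
From Coquelicot Require Import Coquelicot.
Import ListNotations.
Open Scope R_scope.

(* A configuration K' = (k'_1,...,k'_6), k'_n = (c n, d n), n = 1..6,
   is given by the two coordinate functions c, d : nat -> R
   (only the indices 1..6 are relevant). *)

Definition det2 (x1 y1 x2 y2 : R) : R := x1 * y2 - y1 * x2.

Definition det3 (a1 a2 a3 b1 b2 b3 e1 e2 e3 : R) : R :=
  a1 * (b2 * e3 - e2 * b3) - b1 * (a2 * e3 - e2 * a3) + e1 * (a2 * b3 - b2 * a3).

(* i-th column of V(K'), i = 1,2,3:
   k'_{i+3} - k'_i followed by det(k'_i, k'_{i+3} - k'_i) *)
Definition colx (c d : nat -> R) (i : nat) : R := c (i + 3)%nat - c i.
Definition coly (c d : nat -> R) (i : nat) : R := d (i + 3)%nat - d i.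
Definition colz (c d : nat -> R) (i : nat) : R :=
  det2 (c i) (d i) (c (i + 3)%nat - c i) (d (i + 3)%nat - d i).

Definition Vpoly (c d : nat -> R) : R :=
  det3 (colx c d 1) (coly c d 1) (colz c d 1)
       (colx c d 2) (coly c d 2) (colz c d 2)
       (colx c d 3) (coly c d 3) (colz c d 3).

Definition upd (f : nat -> R) (k : nat) (t : R) : nat -> R :=
  fun n => if Nat.eqb n k then t else f n.

Definition singular_point (c d : nat -> R) : Prop :=
  Vpoly c d = 0 /\
  forall k : nat, (1 <= k <= 6)%nat ->
    is_derive (fun t => Vpoly (upd c k t) d) (c k) 0 /\
    is_derive (fun t => Vpoly c (upd d k t)) (d k) 0.

Definition collinear (ps : list (R * R)) : Prop :=
  exists a b e : R, (a <> 0 \/ b <> 0) /\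
    List.Forall (fun p => a * fst p + b * snd p = e) ps.

Definition pt (c d : nat -> R) (n : nat) : R * R := (c n, d n).

Definition leg_degenerate (c d : nat -> R) (l : nat) : Prop :=
  pt c d l = pt c d (l + 3)%nat.

Definition perm123 (i j l : nat) : Prop :=
  (1 <= i <= 3)%nat /\ (1 <= j <= 3)%nat /\ (1 <= l <= 3)%nat /\
  i <> j /\ j <> l /\ i <> l.

From Stdlib Require Import Reals List Lra Lia Classical.
From Coquelicot Require Import Coquelicot.
Import ListNotations.
Open Scope R_scope.

(* The i-th column v_i = (x_i, y_i, z_i) of V(K') holds the Pluecker
   coordinates of the carrier line of leg i, and V = v_i . (v_j x v_l) for every
   cyclic permutation (i, j, l) of (1, 2, 3).  As v_i is affine in k'_i and in
   k'_{i+3}, the four partial derivatives in the coordinates of leg i are affine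
   in w := v_j x v_l, and they vanish iff either w = 0, or w_3 <> 0,
   k'_i = k'_{i+3} =: q and w = w_3 (q_2, -q_1, 1); since w is orthogonal to v_j
   and v_l, the latter says that q lies on the carrier lines of legs j and l
   (configuration 4).  Otherwise v_1, v_2, v_3 are pairwise parallel.  As v_i = 0
   exactly when leg i degenerates, and parallel nonzero columns describe the same
   line, configurations 1-3 follow according to the number of degenerate legs. *)

Lemma is_derive_eq (f : R -> R) x l1 l2 :
  is_derive f x l1 -> is_derive f x l2 -> l1 = l2.
Proof.
  intros H1 H2. now rewrite <- (is_derive_unique _ _ _ H1), (is_derive_unique _ _ _ H2).
Qed.

Definition cross_x (c d : nat -> R) (i j : nat) : R :=
  coly c d i * colz c d j - coly c d j * colz c d i.
Definition cross_y (c d : nat -> R) (i j : nat) : R :=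
  colz c d i * colx c d j - colz c d j * colx c d i.
Definition cross_z (c d : nat -> R) (i j : nat) : R :=
  colx c d i * coly c d j - colx c d j * coly c d i.

Definition legs_parallel (c d : nat -> R) (i j : nat) : Prop :=
  cross_x c d i j = 0 /\ cross_y c d i j = 0 /\ cross_z c d i j = 0.

(* A point p lies on the carrier line of leg i iff y_i p_1 - x_i p_2 = z_i.
   For a degenerate leg this equation holds for every p. *)
Definition on_carrier (c d : nat -> R) (i : nat) (p : R * R) : Prop :=
  coly c d i * fst p - colx c d i * snd p = colz c d i.

Definition cyclic123 (i j l : nat) : Prop :=
  (i = 1 /\ j = 2 /\ l = 3)%nat \/ (i = 2 /\ j = 3 /\ l = 1)%nat \/
  (i = 3 /\ j = 1 /\ l = 2)%nat.

Ltac derive_Vpoly :=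
  intros [[-> [-> ->]] | [[-> [-> ->]] | [-> [-> ->]]]];
  unfold cross_x, cross_y, cross_z, Vpoly, colx, coly, colz, det3, det2, upd; simpl;
  auto_derive; (try exact I); ring.

Lemma is_derive_Vpoly_c_base c d i j l x : cyclic123 i j l ->
  is_derive (fun t => Vpoly (upd c i t) d) x
    (cross_z c d j l * d (i + 3)%nat - cross_x c d j l).
Proof. derive_Vpoly. Qed.

Lemma is_derive_Vpoly_d_base c d i j l x : cyclic123 i j l ->
  is_derive (fun t => Vpoly c (upd d i t)) x
    (- cross_y c d j l - cross_z c d j l * c (i + 3)%nat).
Proof. derive_Vpoly. Qed.

Lemma is_derive_Vpoly_c_platform c d i j l x : cyclic123 i j l ->
  is_derive (fun t => Vpoly (upd c (i + 3) t) d) x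
    (cross_x c d j l - cross_z c d j l * d i).
Proof. derive_Vpoly. Qed.

Lemma is_derive_Vpoly_d_platform c d i j l x : cyclic123 i j l ->
  is_derive (fun t => Vpoly c (upd d (i + 3) t)) x
    (cross_y c d j l + cross_z c d j l * c i).
Proof. derive_Vpoly. Qed.

Lemma cyclic123_bounds i j l : cyclic123 i j l -> (1 <= i <= 3)%nat.
Proof. intros [[-> _] | [[-> _] | [-> _]]]; lia. Qed.

Lemma singular_leg_equations c d i j l : singular_point c d -> cyclic123 i j l ->
  cross_z c d j l * d (i + 3)%nat - cross_x c d j l = 0 /\
  - cross_y c d j l - cross_z c d j l * c (i + 3)%nat = 0 /\
  cross_x c d j l - cross_z c d j l * d i = 0 /\
  cross_y c d j l + cross_z c d j l * c i = 0.
Proof.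
  intros [_ Hgrad] Hijl.
  pose proof (cyclic123_bounds _ _ _ Hijl) as Hi.
  destruct (Hgrad i ltac:(lia)) as [Hc Hd].
  destruct (Hgrad (i + 3)%nat ltac:(lia)) as [Hc' Hd'].
  repeat split; eapply is_derive_eq.
  - exact (is_derive_Vpoly_c_base c d i j l (c i) Hijl).
  - exact Hc.
  - exact (is_derive_Vpoly_d_base c d i j l (d i) Hijl).
  - exact Hd.
  - exact (is_derive_Vpoly_c_platform c d i j l (c (i + 3)%nat) Hijl).
  - exact Hc'.
  - exact (is_derive_Vpoly_d_platform c d i j l (d (i + 3)%nat) Hijl).
  - exact Hd'.
Qed.

Lemma leg_direction_nonzero c d i : ~ leg_degenerate c d i ->
  colx c d i <> 0 \/ coly c d i <> 0.
Proof.
  intros Hnd. unfold colx, coly.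
  destruct (Req_dec (c (i + 3)%nat - c i) 0) as [Ex|Ex]; [|now left].
  destruct (Req_dec (d (i + 3)%nat - d i) 0) as [Ey|Ey]; [|now right].
  exfalso; apply Hnd. unfold leg_degenerate, pt. f_equal; lra.
Qed.

Lemma on_carrier_leg_ends c d i :
  List.Forall (on_carrier c d i) [pt c d i; pt c d (i + 3)].
Proof. unfold on_carrier, colx, coly, colz, det2; repeat constructor; simpl; ring. Qed.

Lemma collinear_of_on_carrier c d i ps : ~ leg_degenerate c d i ->
  List.Forall (on_carrier c d i) ps -> collinear ps.
Proof.
  intros Hnd Hps. exists (coly c d i), (- colx c d i), (colz c d i). split.
  - destruct (leg_direction_nonzero c d i Hnd); [right | left]; lra.
  - revert Hps; apply Forall_impl. unfold on_carrier; intros p Hp; lra.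
Qed.

Lemma collinear_repeat (q p : R * R) : collinear [q; p; p].
Proof.
  destruct q as [q1 q2], p as [p1 p2].
  destruct (Req_dec p1 q1) as [E|E].
  - exists 1, 0, q1. split; [left; lra|]. subst; repeat constructor; simpl; lra.
  - exists (p2 - q2), (q1 - p1), (p2 * q1 - q2 * p1). split; [right; lra|].
    repeat constructor; simpl; ring.
Qed.

Lemma collinear_leg_through c d j q : on_carrier c d j q ->
  collinear [q; pt c d j; pt c d (j + 3)].
Proof.
  intros Hq. destruct (classic (leg_degenerate c d j)) as [Hd|Hnd].
  - rewrite <- Hd. apply collinear_repeat.
  - apply (collinear_of_on_carrier c d j); [exact Hnd|].
    constructor; [exact Hq | apply on_carrier_leg_ends].
Qed.

Lemma legs_parallel_sym c d i j : legs_parallel c d i j -> legs_parallel c d j i.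
Proof. unfold legs_parallel, cross_x, cross_y, cross_z; intros; repeat split; lra. Qed.

Lemma on_carrier_of_parallel c d i j : legs_parallel c d i j -> ~ leg_degenerate c d j ->
  List.Forall (on_carrier c d i) [pt c d j; pt c d (j + 3)].
Proof.
  intros (Px & Py & Pz) Hnd.
  set (defect := coly c d i * c j - colx c d i * d j - colz c d i).
  assert (Hx : colx c d j * defect = - (c j * cross_z c d i j + cross_y c d i j))
    by (unfold defect, cross_y, cross_z, colx, coly, colz, det2; ring).
  assert (Hy : coly c d j * defect = cross_x c d i j - d j * cross_z c d i j)
    by (unfold defect, cross_x, cross_z, colx, coly, colz, det2; ring).
  rewrite Px, Py, Pz in *.
  assert (Hdefect : defect = 0).
  { destruct (leg_direction_nonzero c d j Hnd) as [N|N];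
      [apply (Rmult_eq_reg_l (colx c d j)) | apply (Rmult_eq_reg_l (coly c d j))]; lra. }
  unfold defect, on_carrier in *. repeat constructor; simpl; [lra|].
  unfold cross_z, colx, coly in *. lra.
Qed.

Lemma on_carrier_of_cross c d j l p :
  cross_x c d j l = cross_z c d j l * snd p ->
  cross_y c d j l = - cross_z c d j l * fst p ->
  cross_z c d j l <> 0 ->
  on_carrier c d j p /\ on_carrier c d l p.
Proof.
  intros Hx Hy Hz. unfold on_carrier.
  assert (Tj : cross_x c d j l * colx c d j + cross_y c d j l * coly c d j
               + cross_z c d j l * colz c d j = 0)
    by (unfold cross_x, cross_y, cross_z; ring).
  assert (Tl : cross_x c d j l * colx c d l + cross_y c d j l * coly c d l
               + cross_z c d j l * colz c d l = 0)
    by (unfold cross_x, cross_y, cross_z; ring).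
  rewrite Hx, Hy in Tj, Tl.
  split; apply (Rmult_eq_reg_l (cross_z c d j l)); [lra | exact Hz | lra | exact Hz].
Qed.

Definition legs_collinear (c d : nat -> R) : Prop :=
  collinear [pt c d 1; pt c d 2; pt c d 3; pt c d 4; pt c d 5; pt c d 6].

Definition degenerate_leg_collinear_legs (c d : nat -> R) : Prop :=
  exists i j l : nat, perm123 i j l /\ leg_degenerate c d l /\
    collinear [pt c d i; pt c d (i + 3); pt c d j; pt c d (j + 3)].

Definition two_degenerate_legs (c d : nat -> R) : Prop :=
  exists i j : nat, (1 <= i <= 3)%nat /\ (1 <= j <= 3)%nat /\ i <> j /\
    leg_degenerate c d i /\ leg_degenerate c d j.

Definition degenerate_leg_concurrent_legs (c d : nat -> R) : Prop :=
  exists i j l : nat, perm123 i j l /\ leg_degenerate c d l /\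
    collinear [pt c d l; pt c d i; pt c d (i + 3)] /\
    collinear [pt c d l; pt c d j; pt c d (j + 3)].

Lemma singular_leg_cases c d i j l : singular_point c d -> cyclic123 i j l ->
  legs_parallel c d j l \/ degenerate_leg_concurrent_legs c d.
Proof.
  intros Hsing Hijl.
  destruct (singular_leg_equations c d i j l Hsing Hijl) as (Ec & Ed & Ec' & Ed').
  destruct (Req_dec (cross_z c d j l) 0) as [Z|Z].
  { left. rewrite Z in *. repeat split; lra. }
  right. exists j, l, i.
  (* base and platform equations differ by cross_z times k'_{i+3} - k'_i *)
  assert (Hc : c i = c (i + 3)%nat)
    by (apply (Rmult_eq_reg_l (cross_z c d j l)); [lra | exact Z]).
  assert (Hd : d i = d (i + 3)%nat)
    by (apply (Rmult_eq_reg_l (cross_z c d j l)); [lra | exact Z]).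
  destruct (on_carrier_of_cross c d j l (pt c d i)) as [Hj Hl]; simpl; [lra | lra | exact Z |].
  split; [unfold perm123; destruct Hijl as [(-> & -> & ->) | [(-> & -> & ->) | (-> & -> & ->)]]; lia|].
  split; [unfold leg_degenerate, pt; congruence|].
  split; apply collinear_leg_through; assumption.
Qed.

Lemma collinear_two_legs c d i j : legs_parallel c d i j ->
  ~ leg_degenerate c d i -> ~ leg_degenerate c d j ->
  collinear [pt c d i; pt c d (i + 3); pt c d j; pt c d (j + 3)].
Proof.
  intros Pij Hi Hj. apply (collinear_of_on_carrier c d i); [exact Hi|].
  apply (Forall_app _ [_; _] [_; _]).
  split; [apply on_carrier_leg_ends | now apply on_carrier_of_parallel].
Qed.

Lemma collinear_three_legs c d i j l : legs_parallel c d i j -> legs_parallel c d i l ->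
  ~ leg_degenerate c d i -> ~ leg_degenerate c d j -> ~ leg_degenerate c d l ->
  collinear [pt c d i; pt c d j; pt c d l; pt c d (i + 3); pt c d (j + 3); pt c d (l + 3)].
Proof.
  intros Pij Pil Hi Hj Hl. apply (collinear_of_on_carrier c d i); [exact Hi|].
  pose proof (on_carrier_leg_ends c d i) as Ei.
  pose proof (on_carrier_of_parallel c d i j Pij Hj) as Ej.
  pose proof (on_carrier_of_parallel c d i l Pil Hl) as El.
  rewrite !Forall_cons_iff in Ei, Ej, El.
  repeat constructor; tauto.
Qed.

Lemma parallel_legs_cases c d :
  legs_parallel c d 1 2 -> legs_parallel c d 1 3 -> legs_parallel c d 2 3 ->
  legs_collinear c d \/ degenerate_leg_collinear_legs c d \/ two_degenerate_legs c d.
Proof.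
  intros P12 P13 P23.
  destruct (classic (leg_degenerate c d 1)) as [D1|D1];
  destruct (classic (leg_degenerate c d 2)) as [D2|D2];
  destruct (classic (leg_degenerate c d 3)) as [D3|D3];
  try solve [right; right;
    ((exists 1%nat, 2%nat) + (exists 1%nat, 3%nat) + (exists 2%nat, 3%nat));
    repeat split; auto; lia].
  - right; left. exists 2%nat, 3%nat, 1%nat.
    split; [unfold perm123; lia | split; [exact D1 | now apply collinear_two_legs]].
  - right; left. exists 1%nat, 3%nat, 2%nat.
    split; [unfold perm123; lia | split; [exact D2 | now apply collinear_two_legs]].
  - right; left. exists 1%nat, 2%nat, 3%nat.
    split; [unfold perm123; lia | split; [exact D3 | now apply collinear_two_legs]].
  - left. now apply collinear_three_legs.
Qed.

Theorem theorem4 (c d : nat -> R) :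
  singular_point c d ->
  (* (1) all three legs collinear *)
  collinear [pt c d 1; pt c d 2; pt c d 3; pt c d 4; pt c d 5; pt c d 6]
  (* (2) two legs collinear, one leg degenerate *)
  \/ (exists i j l : nat, perm123 i j l /\ leg_degenerate c d l /\
        collinear [pt c d i; pt c d (i + 3); pt c d j; pt c d (j + 3)])
  (* (3) two legs degenerate *)
  \/ (exists i j : nat, (1 <= i <= 3)%nat /\ (1 <= j <= 3)%nat /\ i <> j /\
        leg_degenerate c d i /\ leg_degenerate c d j)
  (* (4) one leg degenerates to q, carrier lines of the other two pass through q *)
  \/ (exists i j l : nat, perm123 i j l /\ leg_degenerate c d l /\
        collinear [pt c d l; pt c d i; pt c d (i + 3)] /\
        collinear [pt c d l; pt c d j; pt c d (j + 3)]).
Proof.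
  intros Hsing.
  change (legs_collinear c d \/ degenerate_leg_collinear_legs c d \/
          two_degenerate_legs c d \/ degenerate_leg_concurrent_legs c d).
  destruct (singular_leg_cases c d 1 2 3 Hsing ltac:(red; lia)) as [P23 | C]; [| tauto].
  destruct (singular_leg_cases c d 2 3 1 Hsing ltac:(red; lia)) as [P31 | C]; [| tauto].
  destruct (singular_leg_cases c d 3 1 2 Hsing ltac:(red; lia)) as [P12 | C]; [| tauto].
  apply legs_parallel_sym in P31.
  destruct (parallel_legs_cases c d P12 P31 P23) as [H | [H | H]]; tauto.
Qed.
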